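(* Fix a bin size $B\in\mathbb{N}$, $B\ge 1$, with bin boundaries $L_j=jB$ for $j=1,2,\ldots$, and a level $\alpha\in(0,1)$. Let $T^{(1)},\ldots,T^{(n)},T^{(n+1)}$ be independent and identically distributed random token sequences (reasoning traces), where $T^{(1)},\dots,T^{(n)}$ form the calibration set and $T^{(n+1)}$ is the test trace. For a trace $T$ and prefix length $\ell>0$ let $u(T;\ell)$ be the number of keyword arrivals in the prefix $T[1:\ell]$ divided by $\ell$, and write $u_i(L_j)=u(T^{(i)};L_j)$. For each $i\in\{1,\ldots,n+1\}$ define $$M_i=\max_{j:\,L_j\le |T^{(i)}|} u_i(L_j),$$ with the convention that $M_i=-\infty$ if no boundary satisfies $L_j\le|T^{(i)}|$. Let $k=\lceil (n+1)(1-\alpha)\rceil$ and set $\tau^\star=M_{(k)}$, the $k$-th smallest of $M_1,\ldots,M_n$, with $\tau^\star=+\infty$ if $k>n$. Then $$\mathbb{P}\big(\exists j \text{ with } L_j\le |T^{(n+1)}|:\ u_{n+1}(L_j)>\tau^\star\big)=\mathbb{P}(M_{n+1}>\tau^\star)\le\alpha.$$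
   Context: A reasoning trace $T=(t_1,\ldots,t_L)$ is a finite sequence of tokens of length $|T|=L$. A fixed finite set $\mathcal{K}$ of keyword phrases is given, and the ''keyword arrivals'' in a trace are a deterministic set of token positions determined by $\mathcal{K}$ (positions at which a keyword phrase is detected by a fixed deterministic matching procedure); thus $u(T;\ell)$ is a deterministic function of $T$ and $\ell$. The stopping rule halts a test trace at the first bin boundary $L_j$ at which $u(T;L_j)>\tau^\star$; the event bounded is the event that the test trace is stopped. *)

From mathcomp Require Import all_boot all_order all_algebra.
From mathcomp Require Import all_classical all_reals all_analysis.
Set Implicit Arguments. Unset Strict Implicit. Unset Printing Implicit Defensive.
Import Order.TTheory GRing.Theory Num.Theory.
Local Open Scope ring_scope.
Local Open Scope ereal_scope.
Local Open Scope classical_set_scope.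

Section Defs.
Variables (R : realType) (Tok : Type).

(* arr T p : a keyword arrival is detected at (1-indexed) position p of trace T.
   It is an arbitrary deterministic function of the trace (the fixed matching
   procedure for the keyword set K). *)

Definition u (arr : seq Tok -> nat -> bool) (T : seq Tok) (l : nat) : R :=
  ((count (arr T) (iota 1 l))%:R / l%:R)%R.

Definition Mval (arr : seq Tok -> nat -> bool) (B : nat) (T : seq Tok) : \bar R :=
  \big[Order.max/-oo]_(1 <= j < (size T %/ B).+1) (u arr T (j * B))%:E.

Definition kidx (alpha : R) (n : nat) : nat :=
  `|Num.ceil ((n.+1)%:R * (1 - alpha))%R|%N.

Definition kth_smallest (s : seq (\bar R)) (k : nat) : \bar R :=
  if (size s < k)%N then +oo else nth +oo (sort <=%O s) k.-1.

Definition tau_star (arr : seq Tok -> nat -> bool) (B : nat) (alpha : R)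
  (n : nat) (cal : 'I_n -> seq Tok) : \bar R :=
  kth_smallest [seq Mval arr B (cal i) | i <- enum 'I_n] (kidx alpha n).

End Defs.

(* mutual independence + identical distribution of the n+1 traces
   (discrete sigma-algebra on traces: every preimage is an event) *)
Definition iid_traces d (Omega : measurableType d) (R : realType) (Tok : Type)
  (P : probability Omega R) (m : nat) (T : 'I_m.+1 -> Omega -> seq Tok) : Prop :=
  [/\ (forall i (A : set (seq Tok)), measurable (T i @^-1` A)),
      (forall A : 'I_m.+1 -> set (seq Tok),
         P (\bigcap_(i in [set: 'I_m.+1]) (T i @^-1` A i))
         = \prod_(i < m.+1) P (T i @^-1` A i))
    & (forall i (A : set (seq Tok)), P (T i @^-1` A) = P (T ord0 @^-1` A))].

From HB Require Import structures.
From mathcomp Require Import all_boot all_order all_algebra.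
From mathcomp Require Import all_classical all_reals all_analysis.
From mathcomp Require Import measurable_realfun fingroup perm zify.
Import Order.TTheory GRing.Theory Num.Theory.

(* Write M_1, ..., M_(n+1) for the scores of the traces.  The test trace is
   stopped iff at least k calibration scores lie strictly below M_(n+1), i.e.
   iff the strict rank of M_(n+1) among all n+1 scores is at least k.  Since
   the traces are i.i.d., the law of the score vector is determined by its
   values on boxes, where it is a product of equal factors, so it is invariant
   under permutations and every index has the same probability of having rank
   at least k.  At most n+1-k indices can have rank at least k at once: the
   one with the smallest score among them has k indices strictly below it,
   none of which is among them.  Hence (n+1) P(stop) <= n+1-k <= (n+1) alpha. *)

Local Open Scope order_scope.

Section strict_rank.
Context {disp : Order.disp_t} {T : orderType disp} {I : finType}.
Implicit Types (x : I -> T) (i : I).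

Definition strict_rank x i : nat := #|[set j | x j < x i]|.

Lemma strict_rankE x i : strict_rank x i = count (fun j => x j < x i) (enum I).
Proof. by rewrite /strict_rank cardsE cardE -size_filter /enum_mem filter_predT. Qed.

Lemma strict_rank_comp_perm x (s : {perm I}) i :
  strict_rank (x \o s) i = strict_rank x (s i).
Proof.
rewrite /strict_rank -[RHS](card_preimset _ (@perm_inj _ s)).
by apply: eq_card => j; rewrite !inE.
Qed.

Lemma sum_strict_rank_ge x k :
  (\sum_i (k <= strict_rank x i) <= #|I| - k)%N.
Proof.
set S := [set i | (k <= strict_rank x i)%N].
have -> : (\sum_i (k <= strict_rank x i) = #|S|)%N.
  rewrite -sum1_card [RHS]big_mkcond /=.
  by apply: eq_bigr => i _; rewrite inE; case: leqP.
have [->|[i0 i0S]] := set_0Vmem S; first by rewrite cards0.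
case: (arg_minP x i0S) => imin imin_S imin_min.
have below_out : [set j | x j < x imin] \subset ~: S.
  apply/fintype.subsetP => j; rewrite inE finset.in_setC => ltj; apply/negP => jS.
  by have := imin_min j jS; rewrite leNgt ltj.
have /leq_trans/(_ (subset_leq_card below_out)) : (k <= strict_rank x imin)%N.
  by have : imin \in S := imin_S; rewrite inE.
by rewrite -(cardsC S) => ?; rewrite -addnBA ?leq_addr.
Qed.
End strict_rank.

Section order_statistics.
Context {R : realType}.
Local Open Scope ereal_scope.

Lemma kth_smallest_ltE (s : seq (\bar R)) k v : (0 < k)%N ->
  (kth_smallest s k < v) = (k <= count (< v) s)%N.
Proof.
case: k => // k _; rewrite /kth_smallest -(count_sort <=%O).
have sorted_s := sort_le_sorted s.
case: ltnP => [small_s|large_s].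
  rewrite ltNge leey; apply/esym/negbTE; rewrite -ltnNge count_sort.
  exact: leq_ltn_trans (count_size _ _) small_s.
case: (ltnP k (count (< v) (sort <=%O s))) => [k_lt|k_ge].
  exact: nth_count_lt.
by apply/negbTE; rewrite -leNgt nth_count_ge // k_ge size_sort.
Qed.

Lemma kth_smallest_init_lt_last n (x : 'I_n.+1 -> \bar R) k : (0 < k)%N ->
  (kth_smallest [seq x (widen_ord (leqnSn n) i) | i <- enum 'I_n] k < x ord_max)
  = (k <= strict_rank x ord_max)%N.
Proof.
move=> k_gt0; rewrite kth_smallest_ltE // strict_rankE enum_ordSr -cats1.
by rewrite count_cat !count_map /= ltxx /= !addn0; congr (_ <= _)%N; apply: eq_count.
Qed.

Lemma lt_MvalP {Tok : Type} (arr : seq Tok -> nat -> bool) B : (0 < B)%N ->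
  forall T v, v < Mval R arr B T <->
  exists j, [/\ (1 <= j)%N, (j * B <= size T)%N & v < (u R arr T (j * B))%:E].
Proof.
move=> B_gt0 T v; rewrite /Mval big_add1 /= big_mkord; split.
  case/bigmax_gtP => [|[i _ lt_v]]; first by rewrite ltNge leNye.
  by exists i.+1; split; rewrite // -leq_divRL.
case=> -[|j] [] // _ jB lt_v; apply/bigmax_gtP; right.
have j_lt : (j < size T %/ B)%N by rewrite leq_divRL.
by exists (Ordinal j_lt).
Qed.
End order_statistics.

Section measurable_count.
Context {d} {T : measurableType d} {J : Type} (b : J -> T -> bool).
Hypothesis mb : forall j, measurable [set t | b j t].
Local Open Scope classical_set_scope.

Lemma measurable_count_ge r k :
  measurable [set t | (k <= count (b ^~ t) r)%N].
Proof.
elim: r k => [|a r IHr] k /=.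
  case: k => [|k].
    by rewrite [X in measurable X](_ : _ = setT) //; apply/seteqP; split.
  by rewrite [X in measurable X](_ : _ = set0) //; apply/seteqP; split.
rewrite [X in measurable X](_ : _ =
  ([set t | b a t] `&` [set t | (k.-1 <= count (b ^~ t) r)%N])
  `|` [set t | (k <= count (b ^~ t) r)%N]).
  by apply: measurableU => //; apply: measurableI.
apply/seteqP; split => t /=; case: (b a t) => /=.
- by move=> ?; left; split => //; lia.
- by rewrite add0n; right.
- by case=> [[_ ?]|?]; lia.
- by case=> [[]//|?]; lia.
Qed.
End measurable_count.

Section sum_measure.
Local Open Scope classical_set_scope.
Local Open Scope ereal_scope.
Context {d} {T : measurableType d} {R : realType} (mu : measure T R).

Lemma sum_measure_le_multiplicity (I : finType) (F : I -> set T) (c : nat) :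
  (forall i, measurable (F i)) ->
  (forall t, (\sum_i (t \in F i) <= c)%N) ->
  \sum_i mu (F i) <= c%:R%:E * mu setT.
Proof.
move=> mF Fc.
have mind i : measurable_fun setT (fun t => (\1_(F i) t : R)%:E).
  exact/measurable_EFinP/measurable_indic.
under eq_bigr => i _ do rewrite -[F i]setIT -integral_indic //.
rewrite -ge0_integral_sum // -integral_cst //.
apply: ge0_le_integral => //; first by move=> t _; rewrite sume_ge0.
- exact: emeasurable_sum.
- by move=> t _; rewrite sumEFin lee_fin -natr_sum ler_nat; exact: Fc.
Qed.
End sum_measure.

Section exchangeable_scores.
Context {d} {Omega : measurableType d} {R : realType} (P : probability Omega R).
Context {Tok : Type} {m : nat} (X : 'I_m.+1 -> Omega -> seq Tok).
Context (score : seq Tok -> \bar R).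
Hypothesis iidX : iid_traces P X.
Local Open Scope classical_set_scope.
Local Open Scope ereal_scope.

Definition box (A : 'I_m.+1 -> set (\bar R)) : set ('I_m.+1 -> \bar R) :=
  [set x | forall i, A i (x i)].

Definition product_space := g_sigma_algebraType (range box).

Definition scores w : product_space := fun i => score (X i w).

Definition permuted_scores (s : {perm 'I_m.+1}) w : product_space := scores w \o s.

Lemma permuted_scores1 : permuted_scores 1%g = scores.
Proof. by apply/funext => w; apply/funext => i; rewrite /permuted_scores /= perm1. Qed.

Lemma preimage_permuted_box s A : permuted_scores s @^-1` box A =
  \bigcap_(i in setT) (X i @^-1` (score @^-1` A (s^-1 i)%g)).
Proof.
apply/seteqP; split => w /= Aw i.
  by move=> _; have := Aw (s^-1 i)%g; rewrite /permuted_scores /scores /= permKV.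
by have := Aw (s i) I; rewrite /= permK.
Qed.

Lemma measurable_permuted_scores s : measurable_fun setT (permuted_scores s).
Proof.
apply: (@measurability _ _ Omega product_space setT _ (range box) erefl).
move=> _ [_ [A _ <-] <-].
rewrite setTI preimage_permuted_box.
apply: fin_bigcap_measurable => // i _; case: iidX => mX _ _; exact: mX.
Qed.

HB.instance Definition _ (s : {perm 'I_m.+1}) := isMeasurableFun.Build _ _ _ _
  (permuted_scores s) (measurable_permuted_scores s).

Lemma prob_permuted_box s A :
  P (permuted_scores s @^-1` box A) = P (permuted_scores 1%g @^-1` box A).
Proof.
case: iidX => _ indepX identX.
rewrite !preimage_permuted_box !indepX.
under eq_bigr do rewrite identX; under [RHS]eq_bigr do rewrite identX.
rewrite [LHS](reindex_inj (@perm_inj _ s)) /=.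
by apply: eq_bigr => i _; rewrite invg1 perm1 permK.
Qed.

Lemma exchangeable_scores s S : measurable S ->
  P (permuted_scores s @^-1` S) = P (scores @^-1` S).
Proof.
move=> mS; rewrite -permuted_scores1.
change (distribution P (permuted_scores s) S = distribution P (permuted_scores 1%g) S).
apply: (@measure_unique _ R product_space (range box) (fun=> setT) erefl) mS.
- move=> _ _ [A _ <-] [B _ <-]; exists (fun i => A i `&` B i) => //.
  by apply/seteqP; split => x /=; [move=> AB; split => i; case: (AB i)|move=> [Ax Bx] i].
- by move=> _; exists (fun=> setT) => //; apply/seteqP; split.
- by rewrite bigcup_const.
- by move=> _ [A _ <-]; exact: prob_permuted_box.
- by move=> _; apply: le_lt_trans (probability_le1 _ measurableT) (ltry 1).
Qed.

Lemma measurable_coord j : measurable_fun setT (fun x : product_space => x j).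
Proof.
move=> _ B _; rewrite setTI; apply: sub_sigma_algebra.
exists (fun l => if l == j then B else setT) => //.
apply/seteqP; split => x /=; first by move=> /(_ j); rewrite eqxx.
by move=> Bx l; case: eqP => [->|].
Qed.

Definition rank_event k i : set product_space :=
  [set x | (k <= strict_rank x i)%N].

Lemma measurable_rank_event k i : measurable (rank_event k i).
Proof.
rewrite (_ : rank_event k i =
  [set x | (k <= count (fun j => x j < x i)%E (enum 'I_m.+1))%N]).
  apply: (measurable_count_ge (fun j (x : product_space) => x j < x i)) => j.
  rewrite -[X in measurable X]setTI.
  by have := measurable_lte measurableT (measurable_coord j) (measurable_coord i).
by apply/seteqP; split => x; rewrite /rank_event /= strict_rankE.
Qed.

Lemma prob_rank_event k i :
  P (scores @^-1` rank_event k i) = P (scores @^-1` rank_event k ord_max).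
Proof.
rewrite -(exchangeable_scores (tperm i ord_max) _ (measurable_rank_event k ord_max)).
congr (P _); apply/seteqP; split => w;
  by rewrite /rank_event /permuted_scores /= strict_rank_comp_perm tpermR.
Qed.

Lemma prob_rank_event_le k :
  (m.+1)%:R%:E * P (scores @^-1` rank_event k ord_max) <= (m.+1 - k)%:R%:E.
Proof.
have mE i : measurable (scores @^-1` rank_event k i).
  rewrite -permuted_scores1 -[X in measurable X]setTI.
  exact: measurable_permuted_scores (measurable_rank_event k i).
have -> : (m.+1)%:R%:E * P (scores @^-1` rank_event k ord_max) =
    \sum_i P (scores @^-1` rank_event k i).
  by rewrite (eq_bigr _ (fun i _ => prob_rank_event k i)) sumr_const card_ord mule_natl.
rewrite -[X in _ <= X]mule1 -(probability_setT P).
apply: sum_measure_le_multiplicity => // w.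
rewrite -[in X in (_ <= X - _)%N](card_ord m.+1).
apply: leq_trans (sum_strict_rank_ge (scores w) k); apply/eq_leq/eq_bigr => i _.
by congr (nat_of_bool _); apply/idP/idP => [/set_mem|/mem_set].
Qed.
End exchangeable_scores.

Section conformal_level.
Context {R : realType} (alpha : R) (n : nat).
Hypotheses (alpha_gt0 : (0 < alpha)%R) (alpha_lt1 : (alpha < 1)%R).
Local Open Scope ring_scope.

Let target_gt0 : 0 < (n.+1)%:R * (1 - alpha).
Proof. by rewrite mulr_gt0 // subr_gt0. Qed.

Let kidxE : (kidx alpha n)%:R = (Num.ceil ((n.+1)%:R * (1 - alpha)))%:~R :> R.
Proof.
rewrite /kidx natr_absz ger0_norm // ceil_ge0.
exact: lt_trans (ltrN10 R) target_gt0.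
Qed.

Lemma kidx_ge : (n.+1)%:R * (1 - alpha) <= (kidx alpha n)%:R.
Proof. by rewrite kidxE ceil_ge. Qed.

Lemma kidx_gt0 : (0 < kidx alpha n)%N.
Proof. by rewrite -(ltr0n R); exact: lt_le_trans target_gt0 kidx_ge. Qed.

Lemma kidx_le : (kidx alpha n <= n.+1)%N.
Proof.
rewrite -(ler_nat R) kidxE -[X in _ <= X]/((n.+1)%:~R) ler_int ceil_le_int ltW //.
by rewrite -[X in _ < X]mulr1 ltr_pM2l // ltrBlDr ltrDl.
Qed.

Lemma le_alpha_of_mul_le (p : \bar R) :
  ((n.+1)%:R%:E * p <= (n.+1 - kidx alpha n)%:R%:E)%E -> (p <= alpha%:E)%E.
Proof.
move=> le_p; rewrite -(@lee_pmul2l _ (n.+1)%:R%:E) ?lte_fin //.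
apply: le_trans le_p _; rewrite -EFinM lee_fin natrB ?kidx_le //.
by rewrite lerBlDr -lerBlDl -[X in X - _]mulr1 -mulrBr kidx_ge.
Qed.
End conformal_level.

Local Open Scope ring_scope.
Local Open Scope ereal_scope.
Local Open Scope classical_set_scope.

Theorem proposition1 (R : realType) (d : measure_display)
  (Omega : measurableType d) (P : probability Omega R)
  (Tok : Type) (arr : seq Tok -> nat -> bool)
  (B : nat) (hB : (0 < B)%N) (alpha : R) (ha0 : (0 < alpha)%R) (ha1 : (alpha < 1)%R)
  (n : nat) (T : 'I_n.+1 -> Omega -> seq Tok)
  (hiid : iid_traces P T) :
  let tau w := tau_star arr B alpha (fun i : 'I_n => T (widen_ord (leqnSn n) i) w) in
  let test w := T ord_max w in
  P [set w | exists j : nat, [/\ (1 <= j)%N, (j * B <= size (test w))%N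
                               & tau w < (u R arr (test w) (j * B))%:E]]
    = P [set w | tau w < Mval R arr B (test w)]
  /\ P [set w | tau w < Mval R arr B (test w)] <= alpha%:E.
Proof.
move=> tau test.
have k_gt0 := kidx_gt0 alpha n ha1.
have stop_early : [set w | exists j : nat, [/\ (1 <= j)%N, (j * B <= size (test w))%N
    & tau w < (u R arr (test w) (j * B))%:E]] = [set w | tau w < Mval R arr B (test w)].
  by apply/seteqP; split => w /(lt_MvalP arr _ hB).
have stop_rank : [set w | tau w < Mval R arr B (test w)] =
    scores T (Mval R arr B) @^-1` rank_event (kidx alpha n) ord_max.
  by apply/seteqP; split => w; rewrite /= /rank_event /= -kth_smallest_init_lt_last.
split; first by rewrite stop_early.
rewrite stop_rank; apply: (le_alpha_of_mul_le _ _ ha0 ha1).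
exact: prob_rank_event_le hiid _.
Qed.
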